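(* For all $k\in\mathbb N_+$ and $T\ge0$, $$v(k,T)\ \ge\ \sum_{n<k-1}F\Big(\frac{k}{n+1}\Big)\,\mathbb P(N(T)=n)+kF(1)\,\mathbb P(N(T)\ge k-1).$$
   Context: Let $\lambda>0$ and let $N$ be a Poisson process with intensity $\lambda$, arrival times $0<\sigma_1<\sigma_2<\cdots$, and natural filtration $\mathcal F_t=\sigma(N_s:s\le t)$. Let $F:[0,\infty)\to[0,\infty)$ be strictly increasing and strictly convex with $F(0)=0$. For $k\in\{0,1,\dots\}$ let $\mathcal A_k$ be the set of $(\mathcal F_t)$-adapted, integer-valued, nonnegative, non-increasing processes $\xi$ with $\xi_0=k$ whose values change only at arrival times of $N$, and $v(k,T)=\inf_{\xi\in\mathcal A_k}\mathbb E[\sum_{i:\sigma_i\le T}F(\xi_{\sigma_i-}-\xi_{\sigma_i})+F(\xi_T)]$. *)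

From HB Require Import structures.
From mathcomp Require Import all_boot all_order all_algebra.
From mathcomp Require Import all_classical all_reals all_analysis.
Set Implicit Arguments. Unset Strict Implicit. Unset Printing Implicit Defensive.
Import Order.TTheory GRing.Theory Num.Theory.
Import numFieldNormedType.Exports.
Local Open Scope classical_set_scope.
Local Open Scope ring_scope.

Section PoissonControl.
Context {d : measure_display} {Omega : measurableType d} {R : realType}.
Variable P : probability Omega R.

Definition mutually_independent (X : nat -> Omega -> R) : Prop :=
  forall (s : seq nat) (B : nat -> set R), uniq s ->
    (forall i, measurable (B i)) ->
    P (\bigcap_(i in [set` s]) (X i @^-1` B i)) =
    (\prod_(i <- s) P (X i @^-1` B i))%E.

(* [sig i] is the i-th arrival time sigma_i (with the convention sig 0 = 0),
   [N t] is the counting process N(t) = #{i >= 1 | sigma_i <= t}. *)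
Definition is_poisson_process (lam : R) (sig : nat -> Omega -> R)
    (N : R -> Omega -> nat) : Prop :=
  (forall w, sig 0%N w = 0) /\
  (forall i w, sig i w < sig i.+1 w) /\
  (forall w t, exists i, t < sig i w) /\
  (forall i, measurable_fun setT (fun w => sig i.+1 w - sig i w)) /\
  mutually_independent (fun i w => sig i.+1 w - sig i w) /\
  (forall i x, 0 <= x ->
     P [set w | sig i.+1 w - sig i w <= x] = (1 - expR (- (lam * x)))%:E) /\
  (forall t w, 0 <= t -> sig (N t w) w <= t /\ t < sig (N t w).+1 w).

Definition nat_filtration (N : R -> Omega -> nat) (t : R) : set (set Omega) :=
  smallest (sigma_algebra setT)
    [set A | exists s n, 0 <= s <= t /\ A = N s @^-1` [set n]].

Definition admissible (sig : nat -> Omega -> R) (N : R -> Omega -> nat)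
    (k : nat) (xi : R -> Omega -> nat) : Prop :=
  [/\ (forall w, xi 0 w = k),
      (forall t n, 0 <= t -> nat_filtration N t (xi t @^-1` [set n])),
      (forall s t w, 0 <= s -> s <= t -> (xi t w <= xi s w)%N)
    & (forall s t w, 0 <= s -> s < t -> xi s w <> xi t w ->
         exists i, (0 < i)%N /\ s < sig i w <= t)].

Definition left_lim (xi : R -> Omega -> nat) (t : R) (w : Omega) : R :=
  lim ((fun s => (xi s w)%:R : R) @ t^'-).

Definition cost (F : R -> R) (sig : nat -> Omega -> R) (xi : R -> Omega -> nat)
    (T : R) (w : Omega) : \bar R :=
  (\sum_(1 <= i <oo | (sig i w <= T)%R)
      (F (left_lim xi (sig i w) w - (xi (sig i w) w)%:R))%:E
   + (F (xi T w)%:R)%:E)%E.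

Definition value (F : R -> R) (sig : nat -> Omega -> R) (N : R -> Omega -> nat)
    (k : nat) (T : R) : \bar R :=
  ereal_inf [set (\int[P]_w cost F sig xi T w)%E | xi in admissible sig N k].

End PoissonControl.

From HB Require Import structures.
From mathcomp Require Import all_boot all_order all_algebra.
From mathcomp Require Import all_classical all_reals all_analysis.
From mathcomp Require Import measurable_realfun.
Import Order.TTheory Order.NatMonotonyTheory GRing.Theory Num.Theory.
Import numFieldNormedType.Exports.
Local Open Scope classical_set_scope.
Local Open Scope ring_scope.

(* The bound holds path by path. On a path with n = N(T) arrivals up to T,
   an admissible strategy starting from k sells b_1, ..., b_n at the arrival
   times and keeps b_(n+1) = xi_T, so that its cost is at least
   F(b_1) + ... + F(b_(n+1)) with b_1 + ... + b_(n+1) = k. Convexity and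
   F(0) = 0 give F(a) >= a F(1), hence a cost of at least k F(1); monotonicity
   gives F(max b_j) >= F(k / (n+1)). Integrating this pathwise bound over the
   events {N(T) = n} yields the claim; no distributional property of N is
   needed beyond the measurability of the arrival times. *)

Definition pathwise_bound {R : realType} (F : R -> R) (k n : nat) : R :=
  if (n < k.-1)%N then F (k%:R / n.+1%:R) else k%:R * F 1.

Section ConvexCost.
Context {R : realType} {F : R -> R}.
Hypothesis F0 : F 0 = 0.
Hypothesis F_ge0 : forall x, 0 <= x -> 0 <= F x.
Hypothesis F_incr : forall x y, 0 <= x -> x < y -> F x < F y.
Hypothesis F_convex : forall x y t, 0 <= x -> 0 <= y -> x != y -> 0 < t < 1 ->
  F (t * x + (1 - t) * y) < t * F x + (1 - t) * F y.

Lemma F_nondecr x y : 0 <= x -> x <= y -> F x <= F y.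
Proof. by move=> x0; rewrite le_eqVlt => /predU1P[->//|lt_xy]; exact/ltW/F_incr. Qed.

Lemma natr_mulF1_le a : a%:R * F 1 <= F a%:R.
Proof.
case: a => [|[|a]]; [by rewrite mul0r F0 | by rewrite mul1r |].
set q : R := a.+2%:R.
have q_gt0 : 0 < q by rewrite ltr0n.
have q_neq0 : q != 0 by rewrite lt0r_neq0.
have q_inv01 : 0 < q^-1 < 1 by rewrite invr_gt0 q_gt0 invf_lt1 // ltr1n.
(* convexity between 0 and q, at the point 1 = q^-1 * q *)
have := @F_convex q 0 q^-1 (ltW q_gt0) (lexx 0) q_neq0 q_inv01.
rewrite mulr0 addr0 mulVf // F0 mulr0 addr0 => /ltW F1_le.
have q_inv_gt0 : 0 < q^-1 by rewrite invr_gt0.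
by rewrite -(ler_pM2l q_inv_gt0) mulrA mulVf // mul1r.
Qed.

Lemma sum_natr_mulF1_le m (b : nat -> nat) :
  (\sum_(j < m) b j)%:R * F 1 <= \sum_(j < m) F (b j)%:R.
Proof. by rewrite natr_sum mulr_suml; apply: ler_sum => j _; exact: natr_mulF1_le. Qed.

Lemma F_mean_le_sum m (b : nat -> nat) : (0 < m)%N ->
  F ((\sum_(j < m) b j)%:R / m%:R) <= \sum_(j < m) F (b j)%:R.
Proof.
move=> m_gt0.
have [j _ bj_max] := @arg_maxnP _ (Ordinal m_gt0) xpredT (fun i : 'I_m => b i) isT.
have mean_le : (\sum_(i < m) b i)%:R / m%:R <= (b j)%:R :> R.
  rewrite ler_pdivrMr ?ltr0n // -natrM ler_nat.
  by rewrite -[m in (_ <= _ * m)%N]card_ord mulnC -sum_nat_const leq_sum.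
have mean_ge0 : 0 <= (\sum_(i < m) b i)%:R / m%:R :> R by rewrite divr_ge0.
apply: le_trans (F_nondecr _ _ mean_ge0 mean_le) _.
by rewrite (bigD1 j) //= lerDl sumr_ge0 // => i _; rewrite F_ge0 ?ler0n.
Qed.

Lemma pathwise_bound_ge0 k n : 0 <= pathwise_bound F k n.
Proof.
rewrite /pathwise_bound; case: ifP => _; first by rewrite F_ge0 // divr_ge0.
by rewrite mulr_ge0 ?F_ge0.
Qed.

Lemma pathwise_bound_le_increments (c : nat -> nat) n :
  (forall j, (c j.+1 <= c j)%N) ->
  pathwise_bound F (c 0%N) n <= \sum_(j < n) F (c j - c j.+1)%:R + F (c n)%:R.
Proof.
move=> c_noninc.
pose b j := if (j < n)%N then (c j - c j.+1)%N else c n.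
have telescope m : (\sum_(j < m) (c j - c j.+1) + c m = c 0)%N.
  elim: m => [|m IH]; first by rewrite big_ord0.
  by rewrite big_ord_recr /= -addnA subnK.
have sum_b : (\sum_(j < n.+1) b j)%N = c 0%N.
  rewrite big_ord_recr /= /b ltnn -(telescope n); congr (_ + _)%N.
  by apply: eq_bigr => j _; rewrite ltn_ord.
have sum_Fb : \sum_(j < n.+1) F (b j)%:R
    = \sum_(j < n) F (c j - c j.+1)%:R + F (c n)%:R.
  rewrite big_ord_recr /= /b ltnn; congr (_ + _).
  by apply: eq_bigr => j _; rewrite ltn_ord.
rewrite -sum_Fb /pathwise_bound -sum_b; case: ifP => _.
- exact: F_mean_le_sum.
- exact: sum_natr_mulF1_le.
Qed.

End ConvexCost.

Section Arrivals.
Context {R : realType} {Omega : Type}.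
Context {sig : nat -> Omega -> R} {N : R -> Omega -> nat}.
Hypothesis sig0 : forall w, sig 0%N w = 0.
Hypothesis sig_lt : forall i w, sig i w < sig i.+1 w.
Hypothesis N_bracket : forall t w, 0 <= t ->
  sig (N t w) w <= t /\ t < sig (N t w).+1 w.

Lemma arrival_leE w : {mono sig^~ w : i j / (i <= j)%N >-> i <= j}.
Proof. exact: incnP. Qed.

Lemma arrival_ltE w : {mono sig^~ w : i j / (i < j)%N >-> i < j}.
Proof. exact/leW_mono/arrival_leE. Qed.

Lemma arrival_ge0 i w : 0 <= sig i w.
Proof. by rewrite -(sig0 w) arrival_leE. Qed.

Lemma count_geE t w m : 0 <= t -> (m <= N t w)%N = (sig m w <= t).
Proof.
move=> t0; have [sigN_le lt_sigN1] := N_bracket t w t0.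
apply/idP/idP => [m_le|sigm_le]; first by rewrite (le_trans _ sigN_le) ?arrival_leE.
by rewrite -ltnS -(arrival_ltE w) (le_lt_trans sigm_le).
Qed.

End Arrivals.

Section ArrivalPaths.
Context {d : measure_display} {Omega : measurableType d} {R : realType}.
Context {sig : nat -> Omega -> R} {N : R -> Omega -> nat}.
Hypothesis sig0 : forall w, sig 0%N w = 0.
Hypothesis sig_lt : forall i w, sig i w < sig i.+1 w.
Hypothesis N_bracket : forall t w, 0 <= t ->
  sig (N t w) w <= t /\ t < sig (N t w).+1 w.
Hypothesis measurable_interarrival :
  forall i, measurable_fun setT (fun w => sig i.+1 w - sig i w).

Lemma measurable_arrival i : measurable_fun setT (sig i).
Proof.
elim: i => [|i IH].
  by rewrite (_ : sig 0%N = cst 0); [exact: measurable_cst | apply/funext].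
rewrite (_ : sig i.+1 = (fun w => sig i w + (sig i.+1 w - sig i w))).
  exact: measurable_funD.
by apply/funext => w; rewrite addrC subrK.
Qed.

Lemma measurable_count_ge t m : 0 <= t -> measurable [set w | (m <= N t w)%N].
Proof.
move=> t0; have -> : [set w | (m <= N t w)%N] = sig m @^-1` `]-oo, t].
  rewrite preimage_itvNyc; apply/seteqP; split => w /=;
    by rewrite (count_geE sig_lt N_bracket _ _ _ t0).
by rewrite -[_ @^-1` _]setTI; exact: measurable_arrival.
Qed.

Lemma measurable_count_eq t n : 0 <= t -> measurable [set w | N t w = n].
Proof.
move=> t0; have -> : [set w | N t w = n] =
    [set w | (n <= N t w)%N] `\` [set w | (n.+1 <= N t w)%N].
  apply/seteqP; split => w /=; first by move=> ->; rewrite leqnn ltnn.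
  by case=> n_le /negP; rewrite -leqNgt => le_n; apply/eqP; rewrite eqn_leq le_n.
by apply: measurableD; exact: measurable_count_ge.
Qed.

Section AdmissiblePath.
Context {F : R -> R} {xi : R -> Omega -> nat} {k : nat}.
Hypothesis F0 : F 0 = 0.
Hypothesis F_ge0 : forall x, 0 <= x -> 0 <= F x.
Hypothesis F_incr : forall x y, 0 <= x -> x < y -> F x < F y.
Hypothesis F_convex : forall x y t, 0 <= x -> 0 <= y -> x != y -> 0 < t < 1 ->
  F (t * x + (1 - t) * y) < t * F x + (1 - t) * F y.
Hypothesis xi0 : forall w, xi 0 w = k.
Hypothesis xi_noninc : forall s t w, 0 <= s -> s <= t -> (xi t w <= xi s w)%N.
Hypothesis xi_jumps : forall s t w, 0 <= s -> s < t -> xi s w <> xi t w ->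
  exists i, (0 < i)%N /\ s < sig i w <= t.

Lemma admissible_const j s w :
  sig j w <= s < sig j.+1 w -> xi s w = xi (sig j w) w.
Proof.
case/andP; rewrite le_eqVlt => /predU1P[->//|sigj_lt_s s_lt_sigj1].
have [->//|/eqP xi_ne] := eqVneq (xi (sig j w) w) (xi s w).
have [i [_ /andP[sigj_lt_sigi sigi_le_s]]] :=
  xi_jumps _ _ _ (arrival_ge0 sig0 sig_lt j w) sigj_lt_s xi_ne.
have := le_lt_trans sigi_le_s s_lt_sigj1.
rewrite !(arrival_ltE sig_lt) in sigj_lt_sigi * => i_le_j.
by rewrite ltnS leqNgt sigj_lt_sigi in i_le_j.
Qed.

Lemma admissible_arrival_noninc j w : (xi (sig j.+1 w) w <= xi (sig j w) w)%N.
Proof. by apply: xi_noninc; [exact: (arrival_ge0 sig0 sig_lt) | exact/ltW]. Qed.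

Lemma left_lim_arrival j w : left_lim xi (sig j.+1 w) w = (xi (sig j w) w)%:R.
Proof.
rewrite /left_lim; apply: lim_near_cst; first exact: Rhausdorff.
near=> s; rewrite (admissible_const j) //; apply/andP; split => //.
by apply/ltW; near: s; exact: nbhs_left_gt.
Unshelve. all: by end_near.
Qed.

Lemma cost_ge_increments T w : 0 <= T ->
  ((\sum_(j < N T w) F (xi (sig j w) w - xi (sig j.+1 w) w)%:R
     + F (xi (sig (N T w) w) w)%:R)%:E <= cost F sig xi T w)%E.
Proof.
move=> T0; have [sigN_le lt_sigN1] := N_bracket T w T0.
rewrite /cost EFinD; apply: leeD; last first.
  by rewrite (admissible_const (N T w)) ?sigN_le.
apply: le_trans (nneseries_lim_ge (N T w).+1 _); last first.
  move=> [//|i] _ _; rewrite left_lim_arrival -natrB ?admissible_arrival_noninc //.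
  by rewrite lee_fin F_ge0 ?ler0n.
rewrite big_add1 /= big_mkord [X in (_ <= X)%E](eq_bigl xpredT) => [|i]; last first.
  by apply/idP/(le_trans _ sigN_le); rewrite (arrival_leE sig_lt).
rewrite sumEFin lee_fin; apply: ler_sum => i _.
by rewrite left_lim_arrival natrB ?admissible_arrival_noninc.
Qed.

Lemma pathwise_bound_le_cost T w : 0 <= T ->
  ((pathwise_bound F k (N T w))%:E <= cost F sig xi T w)%E.
Proof.
move=> T0; apply: le_trans (cost_ge_increments T w T0); rewrite lee_fin.
have -> : k = xi (sig 0%N w) w by rewrite sig0 xi0.
exact: (@pathwise_bound_le_increments _ F F0 F_ge0 F_incr F_convex
         (fun j => xi (sig j w) w) _ (admissible_arrival_noninc ^~ w)).
Qed.

End AdmissiblePath.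

End ArrivalPaths.

Section IntegralBounds.
Context {d : measure_display} {T : measurableType d} {R : realType}.
Variable mu : {measure set T -> \bar R}.
Local Open Scope ereal_scope.

(* Unlike [ge0_le_integral], no measurability of [g] is needed: the integral
   of a nonnegative function is a supremum over its simple minorants. *)
Lemma ge0_le_integral_nomeas (f g : T -> \bar R) :
  (forall x, 0 <= f x) -> (forall x, f x <= g x) ->
  \int[mu]_x f x <= \int[mu]_x g x.
Proof.
move=> f_ge0 f_le_g.
have g_ge0 x : 0 <= g x by exact: le_trans (f_ge0 x) (f_le_g x).
rewrite !ge0_integralE //; apply: ereal_sup_le => _ [h h_le_f <-].
by exists h => //= x; apply: le_trans (h_le_f x) _; rewrite /patch /=; case: ifP.
Qed.

Lemma integralZ_indic_ge0 (A : set T) (c : R) : measurable A -> (0 <= c)%R ->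
  \int[mu]_x (c%:E * (\1_A x)%:E) = c%:E * mu A.
Proof.
move=> mA c_ge0; rewrite ge0_integralZl //; last first.
  by apply/measurable_EFinP; exact: measurable_indic.
by rewrite integral_indic // setIT.
Qed.

Lemma integral_nat_tail (X : T -> nat) (g : nat -> R) (m : nat) :
  (forall n, measurable [set x | X x = n]) ->
  measurable [set x | (m <= X x)%N] ->
  (forall n, (0 <= g n)%R) -> (forall n, (m <= n)%N -> g n = g m) ->
  \int[mu]_x (g (X x))%:E =
  \sum_(n < m) (g n)%:E * mu [set x | X x = n]
    + (g m)%:E * mu [set x | (m <= X x)%N].
Proof.
move=> mX mXtail g_ge0 g_tail.
set A := fun n => [set x | X x = n]; set B := [set x | (m <= X x)%N].
have gX x : (g (X x))%:E =
    \sum_(n < m) (g n)%:E * (\1_(A n) x)%:E + (g m)%:E * (\1_B x)%:E.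
  under eq_bigr do rewrite -EFinM.
  rewrite sumEFin -EFinM -EFinD; congr EFin.
  rewrite (eq_bigr (fun n : 'I_m => if n == X x :> nat then g n else 0%R));
    last first.
    move=> n _; rewrite indicE; case: eqP => [n_eq|n_ne].
      by rewrite mem_set ?mulr1.
    by rewrite memNset ?mulr0 // => /esym.
  rewrite -big_mkcond big_ord1_eq indicE; case: ltnP => Xm.
  - by rewrite memNset ?mulr0 ?addr0 //; apply/negP; rewrite -ltnNge.
  - by rewrite mem_set // mulr1 add0r g_tail.
have ind_ge0 (S : set T) (c : R) x : (0 <= c)%R -> 0 <= c%:E * (\1_S x)%:E.
  by move=> c_ge0; rewrite mule_ge0 ?lee_fin.
have m_ind (S : set T) (c : R) : measurable S ->
    measurable_fun setT (fun x => c%:E * (\1_S x)%:E).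
  move=> mS; apply: measurable_funeM; apply/measurable_EFinP.
  exact: measurable_indic.
under eq_integral => x _ do rewrite gX.
rewrite ge0_integralD //; last 4 first.
- by move=> x _; apply: sume_ge0 => n _; exact: ind_ge0.
- by apply: emeasurable_sum => n; exact/m_ind/mX.
- by move=> x _; exact: ind_ge0.
- exact/m_ind/mXtail.
rewrite ge0_integral_sum //; last 2 first.
- by move=> n; exact/m_ind/mX.
- by move=> n x _; exact: ind_ge0.
rewrite integralZ_indic_ge0 //; congr (_ + _).
by apply: eq_bigr => n _; rewrite integralZ_indic_ge0 //; exact: mX.
Qed.

End IntegralBounds.

Theorem lemma2p1 (d : measure_display) (Omega : measurableType d) (R : realType)
  (P : probability Omega R) (lam : R) (sig : nat -> Omega -> R)
  (N : R -> Omega -> nat) (F : R -> R)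
  (hlam : 0 < lam)
  (hN : is_poisson_process P lam sig N)
  (hF0 : F 0 = 0)
  (hFpos : forall x, 0 <= x -> 0 <= F x)
  (hFinc : forall x y, 0 <= x -> x < y -> F x < F y)
  (hFconv : forall x y t, 0 <= x -> 0 <= y -> x != y -> 0 < t < 1 ->
     F (t * x + (1 - t) * y) < t * F x + (1 - t) * F y)
  (k : nat) (hk : (0 < k)%N) (T : R) (hT : 0 <= T) :
  ((\sum_(n < k.-1) (F (k%:R / (n.+1)%:R))%:E * P [set w | N T w = n])
   + (k%:R * F 1)%:E * P [set w | (k.-1 <= N T w)%N]
   <= value P F sig N k T)%E.
Proof.
case: hN => sig0 [sig_lt [_ [m_inter [_ [_ N_bracket]]]]].
rewrite [X in (X <= _)%E](_ : _ =
    \int[P]_w (pathwise_bound F k (N T w))%:E)%E; last first.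
  rewrite (integral_nat_tail P (N T) (pathwise_bound F k) k.-1); last 4 first.
  - by move=> n; exact: (measurable_count_eq sig0 sig_lt N_bracket m_inter T n hT).
  - exact: (measurable_count_ge sig0 sig_lt N_bracket m_inter T _ hT).
  - exact: (pathwise_bound_ge0 hFpos).
  - by move=> n k_le_n; rewrite /pathwise_bound ltnn ltnNge k_le_n.
  rewrite /pathwise_bound ltnn; congr (_ + _)%E.
  by apply: eq_bigr => n _; rewrite ltn_ord.
apply: le_ereal_inf_tmp => _ [xi [xi0 _ xi_noninc xi_jumps] <-].
apply: ge0_le_integral_nomeas => w; first by rewrite lee_fin (pathwise_bound_ge0 hFpos).
exact: (pathwise_bound_le_cost sig0 sig_lt N_bracket hF0 hFpos hFinc hFconv
          xi0 xi_noninc xi_jumps T w hT).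
Qed.
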